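(* Every $n\times n$ Gram-Lorentz matrix $X$ is the Gram matrix of some vectors $\ell_1,\dots,\ell_n\in\mathcal{L}_{\mathrm{rank}(X)+2}$.
   Context: The $m$-dimensional Lorentz cone is $\mathcal{L}_m:=\{(c,x)\in\mathbb{R}\times\mathbb{R}^{m-1}: c\ge\|x\|\}$. An $n\times n$ real symmetric matrix $X$ is Gram-Lorentz if there exist $m\ge1$ and vectors $\ell_1,\dots,\ell_n\in\mathcal{L}_m$ with $X_{ij}=\langle\ell_i,\ell_j\rangle$ for all $i,j$. *)

From HB Require Import structures.
From mathcomp Require Import all_boot all_order all_algebra.
From mathcomp Require Import reals.
Set Implicit Arguments. Unset Strict Implicit. Unset Printing Implicit Defensive.
Import Order.TTheory GRing.Theory Num.Theory.
Local Open Scope ring_scope.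

(* The Lorentz cone L_{m+1} in R x R^m, vectors represented as rows 'rV_(m.+1),
   coordinate 0 is c, coordinates lift ord0 i are the x-part. *)
Definition in_lorentz (R : realType) (m : nat) (v : 'rV[R]_m.+1) : Prop :=
  Num.sqrt (\sum_(i < m) (v ord0 (lift ord0 i)) ^+ 2) <= v ord0 ord0.

Definition is_gram_of (R : realType) (n m : nat) (X : 'M[R]_n) (L : 'M[R]_(n, m)) : Prop :=
  forall i j, X i j = \sum_(k < m) L i k * L j k.

Definition gram_lorentz (R : realType) (n : nat) (X : 'M[R]_n) : Prop :=
  exists (m : nat) (L : 'M[R]_(n, m.+1)),
    is_gram_of X L /\ forall i, in_lorentz (row i L).

From HB Require Import structures.
From mathcomp Require Import all_boot all_order all_algebra.
From mathcomp Require Import reals.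
From mathcomp Require Import zify ring.
Set Implicit Arguments. Unset Strict Implicit. Unset Printing Implicit Defensive.
Import Order.TTheory GRing.Theory Num.Theory.
Local Open Scope ring_scope.

(* Whether a vector (c, x) lies in the Lorentz cone depends only on its squared
   norm and on c, so a configuration of row vectors L may be replaced by any L'
   with the same Gram matrix and the same first column.  If L has p + 2 columns
   and rank L <= p, the rows of L together with e_0 span a proper subspace, so
   some unit vector a is orthogonal to e_0 and to every row.  The Householder
   reflection exchanging a and the last basis vector is orthogonal, fixes e_0
   and kills the last column of L, which can then be dropped.  Iterating, and
   padding with zero columns when there are too few, yields rank L + 2 columns;
   finally rank (L L^T) = rank L. *)

Lemma mulmx_tr_delta (R : pzRingType) m n (A : 'M[R]_(m, n)) j :
  A *m (delta_mx 0 j)^T = col j A.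
Proof. by rewrite trmx_delta colE. Qed.

Lemma exists_row_orthogonal (F : fieldType) k p (A : 'M[F]_(k, p)) : (\rank A < p)%N ->
  exists2 u : 'rV[F]_p, u != 0 & A *m u^T = 0.
Proof.
move=> rkA; set K := kermx A^T; exists (nz_row K).
  rewrite nz_row_eq0 -mxrank_eq0 mxrank_ker mxrank_tr -lt0n; lia.
apply: trmx_inj; rewrite trmx_mul trmxK trmx0.
by apply/sub_kermxP; exact: nz_row_sub.
Qed.

Section GramMatrix.
Variable R : realFieldType.

Lemma mulmx_tr_diag p q (M : 'M[R]_(p, q)) i :
  (M *m M^T) i i = \sum_k M i k ^+ 2.
Proof. by rewrite mxE; apply: eq_bigr => k _; rewrite mxE expr2. Qed.

Lemma mulmx_tr_eq0 p q (M : 'M[R]_(p, q)) : (M *m M^T == 0) = (M == 0).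
Proof.
apply/eqP/eqP => [MM0|->]; last by rewrite mul0mx.
apply/matrixP => i j; rewrite mxE.
have /eqP : \sum_k M i k ^+ 2 = 0 by rewrite -mulmx_tr_diag MM0 mxE.
rewrite psumr_eq0 => [/allP/(_ j (mem_index_enum _))|k _]; last exact: sqr_ge0.
by rewrite sqrf_eq0 => /eqP.
Qed.

Lemma mulmx_tr11_ge0 p (u : 'rV[R]_p) : 0 <= (u *m u^T) 0 0.
Proof. by rewrite mulmx_tr_diag sumr_ge0 // => k _; exact: sqr_ge0. Qed.

Lemma mulmx_tr11_eq0 p (u : 'rV[R]_p) : ((u *m u^T) 0 0 == 0) = (u == 0).
Proof.
rewrite -mulmx_tr_eq0; apply/eqP/eqP => [uu0|->]; last by rewrite mxE.
by apply/matrixP => i j; rewrite !ord1 uu0 mxE.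
Qed.

Lemma mxrank_mulmx_tr p q (M : 'M[R]_(p, q)) : \rank (M *m M^T) = \rank M.
Proof.
apply/eqP; rewrite eqn_leq mxrankM_maxl /=.
have kerM : kermx (M *m M^T) *m M = 0.
  apply/eqP; rewrite -mulmx_tr_eq0 trmx_mul mulmxA -(mulmxA _ M) mulmx_ker.
  by rewrite mul0mx.
have /mxrankS : (kermx (M *m M^T) <= kermx M)%MS by apply/sub_kermxP.
by rewrite !mxrank_ker leq_sub2lE // rank_leq_row.
Qed.

End GramMatrix.

Section Reflection.
Variables (R : realFieldType) (p : nat).
Implicit Types (u v : 'rV[R]_p).

(* For w = 0 the coefficient is 2 / 0 = 0, so reflect_mx 0 = 1. *)
Definition reflect_mx (w : 'rV[R]_p) : 'M[R]_p :=
  1%:M - (2 / (w *m w^T) 0 0) *: (w^T *m w).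

Lemma tr_reflect_mx w : (reflect_mx w)^T = reflect_mx w.
Proof. by rewrite linearB /= tr_scalar_mx linearZ /= trmx_mul trmxK. Qed.

Lemma reflect_mx_orthogonal w : reflect_mx w *m (reflect_mx w)^T = 1%:M.
Proof.
rewrite tr_reflect_mx /reflect_mx; set s := (w *m w^T) 0 0; set c := 2 / s.
have PP : (w^T *m w) *m (w^T *m w) = s *: (w^T *m w).
  by rewrite mulmxA -(mulmxA w^T) [w *m w^T]mx11_scalar mul_mx_scalar scalemxAl.
rewrite mulmxBl !mulmxBr !mul1mx !mulmx1 -!scalemxAl -!scalemxAr PP !scalerA.
have [s0|s_neq0] := eqVneq s 0.
  by rewrite /c s0 invr0 mulr0 !mul0r !scale0r !subr0.
have -> : c * c * s = c + c.
  by rewrite -mulrA /c mulfVK // mulr_natr mulr2n.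
by rewrite scalerDl opprB addrK subrK.
Qed.

Lemma reflect_mx_fix w v : v *m w^T = 0 -> v *m reflect_mx w = v.
Proof.
by move=> vw0; rewrite mulmxBr mulmx1 -scalemxAr mulmxA vw0 mul0mx scaler0 subr0.
Qed.

Lemma reflect_mx_swap u v : u *m u^T = v *m v^T -> u *m reflect_mx (u - v) = v.
Proof.
move=> uv; set w := u - v; set s := (u *m u^T) 0 0 - (u *m v^T) 0 0.
have vu : v *m u^T = u *m v^T.
  by rewrite -[v *m u^T]trmxK trmx_mul trmxK [u *m v^T]mx11_scalar tr_scalar_mx.
have uw : u *m w^T = s%:M.
  by rewrite [LHS]mx11_scalar linearB /= mulmxBr; congr (_%:M); rewrite /s !mxE.
have ww : (w *m w^T) 0 0 = 2 * s.
  rewrite /w linearB /= mulmxBl !mulmxBr -uv vu.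
  rewrite [u *m u^T]mx11_scalar [u *m v^T]mx11_scalar -!raddfB /=.
  by rewrite mxE eqxx mulr1n /s; ring.
rewrite mulmxBr mulmx1 -scalemxAr mulmxA uw mul_scalar_mx scalerA ww.
have [s0|s_neq0] := eqVneq s 0.
  have : w == 0 by rewrite -mulmx_tr11_eq0 ww s0 mulr0.
  by rewrite subr_eq0 => /eqP <-; rewrite s0 !mulr0 scale0r subr0.
have -> : 2 / (2 * s) * s = 1 by field; rewrite s_neq0.
by rewrite scale1r /w opprB addrC subrK.
Qed.

End Reflection.

Section Configurations.
Variable R : rcfType.

Lemma exists_unit_orthogonal k p (A : 'M[R]_(k, p)) : (\rank A < p)%N ->
  exists2 a : 'rV[R]_p, a *m a^T = 1%:M & A *m a^T = 0.
Proof.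
move=> /exists_row_orthogonal[u u_neq0 Au]; set s := (u *m u^T) 0 0.
have s_gt0 : 0 < s by rewrite lt_def mulmx_tr11_eq0 u_neq0 mulmx_tr11_ge0.
exists ((Num.sqrt s)^-1 *: u); last by rewrite linearZ /= -scalemxAr Au scaler0.
rewrite linearZ /= -scalemxAr -scalemxAl scalerA [u *m u^T]mx11_scalar.
by rewrite scale_scalar_mx -expr2 exprVn sqr_sqrtr ?mulVf ?gt_eqF ?ltW.
Qed.

Definition same_gram_col0 n p q (L : 'M[R]_(n, p.+1)) (L' : 'M[R]_(n, q.+1)) :=
  L' *m L'^T = L *m L^T /\ forall i, L' i 0 = L i 0.

Lemma same_gram_col0_trans n p q r (L1 : 'M[R]_(n, p.+1)) (L2 : 'M[R]_(n, q.+1))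
    (L3 : 'M[R]_(n, r.+1)) :
  same_gram_col0 L1 L2 -> same_gram_col0 L2 L3 -> same_gram_col0 L1 L3.
Proof. by move=> [G12 C12] [G23 C23]; split=> [|i]; rewrite ?G23 ?C23. Qed.

Lemma same_gram_col0_orthogonal n p (L : 'M[R]_(n, p.+1)) (H : 'M[R]_p.+1) :
  H *m H^T = 1%:M -> (delta_mx 0 0 : 'rV_p.+1) *m H^T = delta_mx 0 0 ->
  same_gram_col0 L (L *m H).
Proof.
move=> HH e0H; split=> [|i].
  by rewrite trmx_mul mulmxA -(mulmxA L) HH mulmx1.
have /colP/(_ i) := congr1 (mulmx L) (congr1 trmx e0H).
by rewrite trmx_mul trmxK mulmxA !mulmx_tr_delta !mxE.
Qed.

Lemma same_gram_col0_truncate n p (L : 'M[R]_(n, p.+2)) :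
  col ord_max L = 0 ->
  same_gram_col0 L (\matrix_(i < n, j < p.+1) L i (widen_ord (leqnSn _) j)).
Proof.
move=> /colP Lmax; split=> [|i]; last by rewrite mxE; congr (L i _); exact: val_inj.
apply/matrixP => i j; rewrite [RHS]mxE big_ord_recr /=.
have := Lmax i; rewrite !mxE => ->; rewrite mul0r addr0.
by apply: eq_bigr => k _; rewrite !mxE.
Qed.

Lemma same_gram_col0_drop n p (L : 'M[R]_(n, p.+2)) : (\rank L <= p)%N ->
  exists L' : 'M[R]_(n, p.+1), same_gram_col0 L L'.
Proof.
move=> rkL; pose e0 : 'rV[R]_p.+2 := delta_mx 0 0.
pose e1 : 'rV[R]_p.+2 := delta_mx 0 ord_max.
have rkA : (\rank (col_mx e0 L) < p.+2)%N.
  rewrite -addsmxE (leq_ltn_trans (mxrank_adds_leqif _ _).1) //.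
  by rewrite mxrank_delta add1n ltnS.
have [a aa] := exists_unit_orthogonal rkA.
rewrite mul_col_mx => /eqP; rewrite col_mx_eq0 => /andP[/eqP e0a /eqP La].
have e1e1 : e1 *m e1^T = 1%:M.
  by apply/matrixP => i j; rewrite trmx_delta mul_delta_mx !mxE !ord1.
pose H := reflect_mx (a - e1).
have HH : H *m H^T = 1%:M := reflect_mx_orthogonal _.
have aH : a *m H = e1 by apply: reflect_mx_swap; rewrite aa e1e1.
have e0H : e0 *m H^T = e0.
  rewrite tr_reflect_mx reflect_mx_fix // linearB /= mulmxBr e0a sub0r.
  by rewrite trmx_delta mul_delta_mx_0 ?oppr0.
exists (\matrix_(i < n, j < p.+1) (L *m H) i (widen_ord (leqnSn _) j)).
apply: same_gram_col0_trans (same_gram_col0_orthogonal L HH e0H) _.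
apply: same_gram_col0_truncate.
by rewrite -mulmx_tr_delta -/e1 -aH trmx_mul mulmxA -(mulmxA L) HH mulmx1 La.
Qed.

Lemma same_gram_col0_shrink n p q (L : 'M[R]_(n, p.+1)) :
  (\rank L < q)%N -> (q <= p)%N -> exists L' : 'M[R]_(n, q.+1), same_gram_col0 L L'.
Proof.
elim: p L => [|p IHp] L rkL; first by rewrite leqn0 => /eqP q0; rewrite q0 in rkL.
rewrite leq_eqVlt => /predU1P[-> | lt_qp]; first by exists L.
have [L1 LL1] := same_gram_col0_drop (leq_trans (ltnW rkL) lt_qp).
have rkL1 : (\rank L1 < q)%N.
  by rewrite -mxrank_mulmx_tr LL1.1 mxrank_mulmx_tr.
have [L' L1L'] := IHp L1 rkL1 lt_qp.
by exists L'; exact: same_gram_col0_trans LL1 L1L'.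
Qed.

Lemma same_gram_col0_pad n p q (L : 'M[R]_(n, p.+1)) : (p <= q)%N ->
  same_gram_col0 L (\matrix_(i < n, j < q.+1) if (j < p.+1)%N then L i (inord j) else 0).
Proof.
move=> le_pq; split=> [|i]; last first.
  by rewrite mxE /=; congr (L i _); apply: val_inj; rewrite /= inordK.
apply/matrixP => i j; rewrite !mxE.
rewrite (eq_bigr (fun k : 'I_p.+1 => L i (inord k) * L j (inord k))); last first.
  by move=> k _; rewrite mxE inord_val.
rewrite (big_ord_widen q.+1 (fun k => L i (inord k) * L j (inord k))) //.
rewrite [RHS]big_mkcond; apply: eq_bigr => k _; rewrite !mxE.
by case: ifP; rewrite ?mul0r.
Qed.

Lemma same_gram_col0_rank n p q (L : 'M[R]_(n, p.+1)) :
  (\rank L < q)%N -> exists L' : 'M[R]_(n, q.+1), same_gram_col0 L L'.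
Proof.
move=> rkL; have [le_qp|lt_pq] := leqP q p; first exact: same_gram_col0_shrink.
by eexists; apply: same_gram_col0_pad; exact: ltnW.
Qed.

End Configurations.

Section LorentzCone.
Variable R : realType.

Lemma in_lorentz_rowE n p (L : 'M[R]_(n, p.+1)) i :
  in_lorentz (row i L) <-> Num.sqrt ((L *m L^T) i i - L i 0 ^+ 2) <= L i 0.
Proof.
rewrite /in_lorentz mulmx_tr_diag big_ord_recl addrAC subrr add0r !mxE.
by under eq_bigr do rewrite mxE.
Qed.

Lemma in_lorentz_same_gram_col0 n p q (L : 'M[R]_(n, p.+1)) (L' : 'M[R]_(n, q.+1)) i :
  same_gram_col0 L L' -> in_lorentz (row i L) -> in_lorentz (row i L').
Proof. by move=> [G C]; rewrite !in_lorentz_rowE G C. Qed.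

Lemma is_gram_ofE n m (X : 'M[R]_n) (L : 'M[R]_(n, m)) :
  is_gram_of X L <-> X = L *m L^T.
Proof.
split=> [XL | ->]; last by move=> i j; rewrite !mxE; apply: eq_bigr => k _; rewrite mxE.
by apply/matrixP => i j; rewrite XL !mxE; apply: eq_bigr => k _; rewrite mxE.
Qed.

End LorentzCone.

Theorem lemma4p7 (R : realType) (n : nat) (X : 'M[R]_n) :
  gram_lorentz X ->
  exists L : 'M[R]_(n, (\rank X).+2),
    is_gram_of X L /\ forall i, in_lorentz (row i L).
Proof.
move=> [m [L [/is_gram_ofE XL inL]]].
have rkL : (\rank L < (\rank X).+1)%N by rewrite XL mxrank_mulmx_tr.
have [L' LL'] := same_gram_col0_rank rkL.
exists L'; split; first by apply/is_gram_ofE; rewrite LL'.1.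
by move=> i; exact: in_lorentz_same_gram_col0 LL' (inL i).
Qed.
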